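(* (Positive/negative transfer for large first task.) Fix $\rho$ and $N_B$. Then \[ \lim_{N_A\to\infty}E_{A\to B}(\rho)=2(1-\rho)E_B, \] so for $N_A\gg N_B$, $E_{A\to B}(\rho)<E_B$ when $\rho>1/2$ and $E_{A\to B}(\rho)>E_B$ when $\rho<1/2$.
   Context: $\eta_i\ge0$, $\sum_i\eta_i<\infty$, infinitely many $\eta_i>0$. For sample size $N$: $\kappa>0$ solves $1=\sum_i\eta_i/(\kappa+N\eta_i)$, $\gamma=\sum_iN\eta_i^2/(\kappa+N\eta_i)^2$, $q_i=\kappa/(\kappa+N\eta_i)$; subscripts $A,B$ mean $N=N_A,N_B$. $E_{B,i}=q_{B,i}^2\eta_i^2/(1-\gamma_B)$, $E_B=\sum_iE_{B,i}$, and $E_{A\to B}(\rho)=\sum_i[2(1-\rho)(1-q_{A,i})+q_{A,i}^2/(1-\gamma_A)]E_{B,i}$ (replica-method error on task B after sequential training A→B in the noise-free case). *)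

From Stdlib Require Import Reals.
From Coquelicot Require Import Coquelicot.
Open Scope R_scope.

Definition eta_ok (eta : nat -> R) : Prop :=
  (forall i, 0 <= eta i) /\ ex_series eta /\
  (forall n, exists i, (n <= i)%nat /\ 0 < eta i).

Definition kappa_solves (eta : nat -> R) (N k : R) : Prop :=
  0 < k /\ is_series (fun i => eta i / (k + N * eta i)) 1.

Definition gamma (eta : nat -> R) (N k : R) : R :=
  Series (fun i => N * (eta i)^2 / (k + N * eta i)^2).

Definition qcoef (eta : nat -> R) (N k : R) (i : nat) : R :=
  k / (k + N * eta i).

Definition EBi (eta : nat -> R) (NB kB : R) (i : nat) : R :=
  (qcoef eta NB kB i)^2 * (eta i)^2 / (1 - gamma eta NB kB).

Definition EB (eta : nat -> R) (NB kB : R) : R :=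
  Series (EBi eta NB kB).

Definition EAB (eta : nat -> R) (rho NA kA NB kB : R) : R :=
  Series (fun i =>
    (2 * (1 - rho) * (1 - qcoef eta NA kA i)
     + (qcoef eta NA kA i)^2 / (1 - gamma eta NA kA)) * EBi eta NB kB i).

From Stdlib Require Import Reals Lra Lia Psatz.
From Coquelicot Require Import Coquelicot.
Open Scope R_scope.

(* Write f_i = eta_i/(kappa + N eta_i).  Since sum_i f_i = 1, the weights of
   E_{A->B} satisfy the exact identities  sum_i q_i eta_i = kappa  and
   sum_i q_i^2 eta_i/(1 - gamma) = kappa  (the latter because
   1 - gamma = kappa sum_i eta_i/(kappa + N eta_i)^2).  As E_{B,i} <= c eta_i,
   the two N_A-dependent parts of E_{A->B} - 2(1-rho) E_B are O(kappa_A).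
   Finally kappa_N -> 0: splitting sum_i f_i = 1 at an index M with tail
   T_M = sum_{i>=M} eta_i gives 1 <= M/N + T_M/kappa_N, so kappa_N <= 2 T_M
   once N >= 2M. *)

Lemma Series_ge0 (a : nat -> R) :
  (forall n, 0 <= a n) -> ex_series a -> 0 <= Series a.
Proof.
  intros Ha Ea.
  rewrite <- (Rmult_0_l (Series a)), <- Series_scal_l.
  apply Series_le; [intros n; specialize (Ha n); lra | exact Ea].
Qed.

Lemma term_le_Series (a : nat -> R) (i : nat) :
  (forall n, 0 <= a n) -> ex_series a -> a i <= Series a.
Proof.
  intros Ha Ea.
  rewrite (Series_incr_n a (S i)); [simpl pred | lia | exact Ea].
  assert (Htail : 0 <= Series (fun k => a (S i + k)%nat)).
  { apply Series_ge0; [auto | now apply ex_series_incr_n]. }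
  revert Htail. generalize (Series (fun k => a (S i + k)%nat)). intros T HT.
  destruct i as [|i]; simpl.
  - lra.
  - pose proof (cond_pos_sum a i Ha). lra.
Qed.

Lemma ex_series_le_ge0 (a b : nat -> R) :
  (forall n, 0 <= a n <= b n) -> ex_series b -> ex_series a.
Proof.
  intros Hab Eb. apply (ex_series_le a b); [|exact Eb].
  intros n. specialize (Hab n). unfold norm; simpl; unfold abs; simpl.
  rewrite Rabs_pos_eq; lra.
Qed.

Lemma Series_tail_lt (a : nat -> R) (eps : R) :
  ex_series a -> 0 < eps ->
  exists M, (0 < M)%nat /\ Series (fun j => a (M + j)%nat) < eps.
Proof.
  intros Ea Heps.
  destruct (proj1 (is_series_Reals a _) (Series_correct _ Ea) eps Heps) as [M0 HM0].
  specialize (HM0 M0 (le_n _)). unfold R_dist in HM0.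
  exists (S M0). split; [lia|].
  rewrite (Series_incr_n a (S M0)) in HM0; [simpl pred in HM0 | lia | exact Ea].
  replace (sum_f_R0 a M0 - (sum_f_R0 a M0 + Series (fun k => a (S M0 + k)%nat)))
    with (- Series (fun k => a (S M0 + k)%nat)) in HM0 by ring.
  rewrite Rabs_Ropp in HM0. pose proof (Rle_abs (Series (fun k => a (S M0 + k)%nat))). lra.
Qed.

Lemma Series_weighted_le (a w b : nat -> R) (c L : R) :
  (forall i, 0 <= a i) -> (forall i, 0 <= w i <= c * b i) ->
  is_series (fun i => a i * b i) L ->
  ex_series (fun i => a i * w i) /\ 0 <= Series (fun i => a i * w i) <= c * L.
Proof.
  intros Ha Hw HL.
  assert (Hdom : forall i, 0 <= a i * w i <= c * (a i * b i)).
  { intros i. specialize (Ha i). specialize (Hw i). split; nra. }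
  assert (Ecdom : ex_series (fun i => c * (a i * b i))).
  { exact (ex_series_scal_l c _ (ex_intro _ L HL)). }
  assert (Ew : ex_series (fun i => a i * w i)).
  { exact (ex_series_le_ge0 _ _ Hdom Ecdom). }
  split; [exact Ew | split].
  - apply Series_ge0; [apply Hdom | exact Ew].
  - rewrite <- (is_series_unique _ _ HL), <- Series_scal_l.
    now apply Series_le.
Qed.

Lemma Series_transfer_split (rho : R) (q p w : nat -> R) :
  ex_series w -> ex_series (fun i => q i * w i) -> ex_series (fun i => p i * w i) ->
  Series (fun i => (2 * (1 - rho) * (1 - q i) + p i) * w i)
  = 2 * (1 - rho) * Series w - 2 * (1 - rho) * Series (fun i => q i * w i)
    + Series (fun i => p i * w i).
Proof.
  intros Ew Eq Ep.
  rewrite (Series_ext _ (fun i => (2 * (1 - rho) * w i - 2 * (1 - rho) * (q i * w i))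
                                  + p i * w i)) by (intros; ring).
  rewrite Series_plus, Series_minus, !Series_scal_l; auto.
  - exact (ex_series_scal_l _ _ Ew).
  - exact (ex_series_scal_l _ _ Eq).
  - exact (ex_series_minus _ _ (ex_series_scal_l _ _ Ew) (ex_series_scal_l _ _ Eq)).
Qed.

Lemma is_lim_seq_of_dist_le (u v : nat -> R) (l C : R) :
  (forall n, Rabs (u n - l) <= C * v n) -> is_lim_seq v 0 -> is_lim_seq u l.
Proof.
  intros Hd Hv.
  apply (is_lim_seq_le_le (fun n => l - C * v n) u (fun n => l + C * v n)).
  - intros n. specialize (Hd n). apply Rabs_le_between in Hd. lra.
  - replace (Finite l) with (Finite (l - C * 0)) by (f_equal; ring).
    apply is_lim_seq_minus'; [apply is_lim_seq_const | now apply (is_lim_seq_scal_l v C 0)].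
  - replace (Finite l) with (Finite (l + C * 0)) by (f_equal; ring).
    apply is_lim_seq_plus'; [apply is_lim_seq_const | now apply (is_lim_seq_scal_l v C 0)].
Qed.

Lemma is_lim_seq_eventually_lt (u : nat -> R) (l m : R) :
  is_lim_seq u l -> l < m -> exists N, forall n, (N <= n)%nat -> u n < m.
Proof.
  intros Hu Hlm.
  destruct (proj2 (is_lim_seq_spec u l) Hu (mkposreal (m - l) ltac:(lra))) as [N HN].
  exists N. intros n Hn. specialize (HN n Hn). simpl in HN.
  apply Rabs_lt_between in HN. lra.
Qed.

Lemma is_lim_seq_eventually_gt (u : nat -> R) (l m : R) :
  is_lim_seq u l -> m < l -> exists N, forall n, (N <= n)%nat -> m < u n.
Proof.
  intros Hu Hml.
  destruct (proj2 (is_lim_seq_spec u l) Hu (mkposreal (l - m) ltac:(lra))) as [N HN].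
  exists N. intros n Hn. specialize (HN n Hn). simpl in HN.
  apply Rabs_lt_between in HN. lra.
Qed.

Section Resolvent.

Variables (eta : nat -> R) (N k : R).
Hypothesis eta_ge0 : forall i, 0 <= eta i.
Hypothesis N_ge0 : 0 <= N.
Hypothesis k_gt0 : 0 < k.
Hypothesis resolvent_sum : is_series (fun i => eta i / (k + N * eta i)) 1.

Lemma resolvent_denom_gt0 i : 0 < k + N * eta i.
Proof. specialize (eta_ge0 i). nra. Qed.

Lemma qcoef_ge0 i : 0 <= qcoef eta N k i.
Proof. apply Rdiv_le_0_compat; [lra | apply resolvent_denom_gt0]. Qed.

Lemma qcoef_le1 i : qcoef eta N k i <= 1.
Proof.
  unfold qcoef. pose proof (resolvent_denom_gt0 i). specialize (eta_ge0 i).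
  apply Rle_div_l; nra.
Qed.

Lemma one_sub_gamma_series :
  is_series (fun i => k * (eta i / (k + N * eta i) ^ 2)) (1 - gamma eta N k).
Proof.
  set (f := fun i => eta i / (k + N * eta i)).
  set (g := fun i => N * eta i ^ 2 / (k + N * eta i) ^ 2).
  assert (Hfg : forall i, f i - g i = k * (eta i / (k + N * eta i) ^ 2)).
  { intros i. pose proof (resolvent_denom_gt0 i). unfold f, g. field. lra. }
  assert (Hg : forall i, 0 <= g i <= f i).
  { intros i. pose proof (resolvent_denom_gt0 i). specialize (eta_ge0 i). specialize (Hfg i).
    assert (0 <= k * (eta i / (k + N * eta i) ^ 2))
      by (apply Rmult_le_pos; [lra | apply Rdiv_le_0_compat; nra]).
    split; [unfold g; apply Rdiv_le_0_compat; nra | lra]. }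
  assert (Eg : ex_series g).
  { apply (ex_series_le_ge0 g f Hg). now exists 1. }
  apply (is_series_ext (fun i => f i - g i)); [exact Hfg|].
  exact (is_series_minus f g 1 (Series g) resolvent_sum (Series_correct _ Eg)).
Qed.

Hypothesis eta_pos : exists i, 0 < eta i.

Lemma one_sub_gamma_gt0 : 0 < 1 - gamma eta N k.
Proof.
  destruct eta_pos as [i0 Hi0].
  set (h := fun i => k * (eta i / (k + N * eta i) ^ 2)).
  assert (Hh : forall i, 0 <= h i).
  { intros i. pose proof (resolvent_denom_gt0 i). specialize (eta_ge0 i).
    apply Rmult_le_pos; [lra | apply Rdiv_le_0_compat; nra]. }
  assert (0 < h i0).
  { pose proof (resolvent_denom_gt0 i0).
    apply Rmult_lt_0_compat; [lra | apply Rdiv_lt_0_compat; nra]. }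
  pose proof (term_le_Series h i0 Hh (ex_intro _ _ one_sub_gamma_series)).
  unfold h in *. rewrite (is_series_unique _ _ one_sub_gamma_series) in *. lra.
Qed.

Lemma qcoef_eta_series : is_series (fun i => qcoef eta N k i * eta i) k.
Proof.
  assert (Hs : is_series (fun i => k * (eta i / (k + N * eta i))) (k * 1))
    by exact (is_series_scal_l k _ 1 resolvent_sum).
  rewrite Rmult_1_r in Hs.
  refine (is_series_ext _ _ k _ Hs).
  intros i. pose proof (resolvent_denom_gt0 i). unfold qcoef. cbn. field. lra.
Qed.

Lemma qcoef_sq_eta_series :
  is_series (fun i => qcoef eta N k i ^ 2 / (1 - gamma eta N k) * eta i) k.
Proof.
  pose proof one_sub_gamma_gt0 as Hg.
  set (c := k / (1 - gamma eta N k)).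
  assert (Hs : is_series (fun i => c * (k * (eta i / (k + N * eta i) ^ 2)))
                 (c * (1 - gamma eta N k)))
    by exact (is_series_scal_l c _ _ one_sub_gamma_series).
  replace (c * (1 - gamma eta N k)) with k in Hs by (unfold c; field; lra).
  refine (is_series_ext _ _ k _ Hs).
  intros i. pose proof (resolvent_denom_gt0 i). unfold c, qcoef. cbn. field. lra.
Qed.

Lemma kappa_le_twice_tail (M : nat) :
  ex_series eta -> (0 < M)%nat -> 2 * INR M <= N ->
  k <= 2 * Series (fun j => eta (M + j)%nat).
Proof.
  intros Ee HM HMN.
  set (f := fun i => eta i / (k + N * eta i)).
  set (T := Series (fun j => eta (M + j)%nat)).
  assert (HMpos : 0 < INR M) by (apply lt_0_INR; exact HM).
  assert (Hsplit : 1 = sum_f_R0 f (pred M) + Series (fun j => f (M + j)%nat)).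
  { rewrite <- (is_series_unique _ _ resolvent_sum).
    apply Series_incr_n; [exact HM | now exists 1]. }
  assert (Hhead : sum_f_R0 f (pred M) <= / N * INR M).
  { replace (INR M) with (INR (S (pred M))) by (f_equal; lia).
    rewrite <- sum_cte. apply sum_Rle. intros i _.
    pose proof (resolvent_denom_gt0 i). specialize (eta_ge0 i). unfold f.
    apply Rle_div_l; [lra|].
    rewrite Rmult_plus_distr_l, <- Rmult_assoc, Rinv_l by lra.
    assert (0 < / N * k) by (apply Rmult_lt_0_compat; [apply Rinv_0_lt_compat|]; lra).
    lra. }
  assert (Htail : Series (fun j => f (M + j)%nat) <= / k * T).
  { unfold T. rewrite <- Series_scal_l. apply Series_le.
    - intros j. pose proof (resolvent_denom_gt0 (M + j)). specialize (eta_ge0 (M + j)%nat).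
      unfold f. split; [apply Rdiv_le_0_compat; lra|].
      unfold Rdiv. rewrite Rmult_comm. apply Rmult_le_compat_r; [lra|].
      apply Rinv_le_contravar; nra.
    - exact (ex_series_scal_l (/ k) _ (proj1 (ex_series_incr_n eta M) Ee)). }
  assert (/ N * INR M <= / 2).
  { apply (Rmult_le_reg_l N); [lra|]. rewrite <- Rmult_assoc, Rinv_r by lra. lra. }
  assert (Hk : k * (/ k * T) = T) by (field; lra).
  assert (/ 2 <= / k * T) by lra.
  nra.
Qed.

End Resolvent.

Section Transfer.

Variables (eta kappa : nat -> R) (NB : nat).
Hypothesis eta_valid : eta_ok eta.
Hypothesis kappa_valid : forall N : nat, kappa_solves eta (INR N) (kappa N).

Lemma eta_ge0 i : 0 <= eta i.
Proof. apply eta_valid. Qed.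

Lemma eta_pos : exists i, 0 < eta i.
Proof. destruct (proj2 (proj2 eta_valid) 0%nat) as [i [_ Hi]]. now exists i. Qed.

Lemma resolvent_sum N : is_series (fun i => eta i / (kappa N + INR N * eta i)) 1.
Proof. apply kappa_valid. Qed.

Lemma kappa_gt0 N : 0 < kappa N.
Proof. apply kappa_valid. Qed.

Lemma is_lim_seq_kappa : is_lim_seq kappa 0.
Proof.
  apply is_lim_seq_spec. intros eps.
  destruct (Series_tail_lt eta (eps / 2) (proj1 (proj2 eta_valid)))
    as [M [HM HT]]; [pose proof (cond_pos eps); lra|].
  exists (2 * M)%nat. intros N HN.
  assert (Hk : kappa N <= 2 * Series (fun j => eta (M + j)%nat)).
  { apply (kappa_le_twice_tail eta (INR N) (kappa N));
      auto using eta_ge0, pos_INR, kappa_gt0, resolvent_sum.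
    - apply eta_valid.
    - apply (Rle_trans _ (INR (2 * M))); [rewrite mult_INR; simpl; lra | now apply le_INR]. }
  pose proof (kappa_gt0 N). rewrite Rminus_0_r, Rabs_pos_eq; lra.
Qed.

Lemma EBi_le_eta :
  exists c, forall i, 0 <= EBi eta (INR NB) (kappa NB) i <= c * eta i.
Proof.
  pose proof (one_sub_gamma_gt0 eta (INR NB) (kappa NB) eta_ge0 (pos_INR NB)
                (kappa_gt0 NB) (resolvent_sum NB) eta_pos) as Hg.
  set (gB := 1 - gamma eta (INR NB) (kappa NB)) in *.
  exists (Series eta / gB). intros i. unfold EBi. fold gB.
  pose proof (qcoef_ge0 eta (INR NB) (kappa NB) eta_ge0 (pos_INR NB) (kappa_gt0 NB) i).
  pose proof (qcoef_le1 eta (INR NB) (kappa NB) eta_ge0 (pos_INR NB) (kappa_gt0 NB) i).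
  pose proof (term_le_Series eta i eta_ge0 (proj1 (proj2 eta_valid))).
  pose proof (eta_ge0 i).
  set (q := qcoef eta (INR NB) (kappa NB) i) in *.
  split; [apply Rdiv_le_0_compat; nra|].
  replace (Series eta / gB * eta i) with (Series eta * eta i / gB) by (field; lra).
  apply Rmult_le_compat_r; [apply Rlt_le, Rinv_0_lt_compat; lra|].
  assert (q ^ 2 <= 1) by nra. nra.
Qed.

Lemma EB_gt0 : 0 < EB eta (INR NB) (kappa NB).
Proof.
  destruct EBi_le_eta as [c Hc]. destruct eta_pos as [i0 Hi0].
  pose proof (one_sub_gamma_gt0 eta (INR NB) (kappa NB) eta_ge0 (pos_INR NB)
                (kappa_gt0 NB) (resolvent_sum NB) eta_pos).
  pose proof (resolvent_denom_gt0 eta (INR NB) (kappa NB) eta_ge0 (pos_INR NB)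
                (kappa_gt0 NB) i0).
  pose proof (kappa_gt0 NB).
  assert (0 < EBi eta (INR NB) (kappa NB) i0).
  { unfold EBi, qcoef. apply Rdiv_lt_0_compat; [|lra].
    apply Rmult_lt_0_compat; apply pow_lt; [apply Rdiv_lt_0_compat|]; lra. }
  assert (Ec : ex_series (fun i => c * eta i)).
  { exact (ex_series_scal_l c _ (proj1 (proj2 eta_valid))). }
  pose proof (term_le_Series _ i0 (fun i => proj1 (Hc i))
                (ex_series_le_ge0 _ _ Hc Ec)).
  unfold EB. lra.
Qed.

Lemma EAB_dist_le (rho : R) :
  exists C, forall NA : nat,
    Rabs (EAB eta rho (INR NA) (kappa NA) (INR NB) (kappa NB)
          - 2 * (1 - rho) * EB eta (INR NB) (kappa NB)) <= C * kappa NA.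
Proof.
  destruct EBi_le_eta as [c Hc].
  set (w := EBi eta (INR NB) (kappa NB)) in *.
  exists ((2 * Rabs (1 - rho) + 1) * c). intros NA.
  set (q := qcoef eta (INR NA) (kappa NA)).
  set (p := fun i => q i ^ 2 / (1 - gamma eta (INR NA) (kappa NA))).
  pose proof (one_sub_gamma_gt0 eta (INR NA) (kappa NA) eta_ge0 (pos_INR NA)
                (kappa_gt0 NA) (resolvent_sum NA) eta_pos).
  destruct (Series_weighted_le q w eta c (kappa NA)) as [Eq [Xlo Xhi]].
  { exact (qcoef_ge0 eta (INR NA) (kappa NA) eta_ge0 (pos_INR NA) (kappa_gt0 NA)). }
  { exact Hc. }
  { exact (qcoef_eta_series eta (INR NA) (kappa NA) eta_ge0 (pos_INR NA)
             (kappa_gt0 NA) (resolvent_sum NA)). }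
  destruct (Series_weighted_le p w eta c (kappa NA)) as [Ep [Ylo Yhi]].
  { intros i. apply Rdiv_le_0_compat; [apply pow2_ge_0 | lra]. }
  { exact Hc. }
  { exact (qcoef_sq_eta_series eta (INR NA) (kappa NA) eta_ge0 (pos_INR NA)
             (kappa_gt0 NA) (resolvent_sum NA) eta_pos). }
  assert (Ew : ex_series w).
  { apply (ex_series_le_ge0 _ _ Hc).
    exact (ex_series_scal_l c _ (proj1 (proj2 eta_valid))). }
  set (X := Series (fun i => q i * w i)) in *.
  set (Y := Series (fun i => p i * w i)) in *.
  assert (Hsplit : EAB eta rho (INR NA) (kappa NA) (INR NB) (kappa NB)
                   = 2 * (1 - rho) * EB eta (INR NB) (kappa NB) - 2 * (1 - rho) * X + Y)
    by exact (Series_transfer_split rho q p w Ew Eq Ep).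
  rewrite Hsplit.
  replace (2 * (1 - rho) * EB eta (INR NB) (kappa NB) - 2 * (1 - rho) * X + Y
           - 2 * (1 - rho) * EB eta (INR NB) (kappa NB)) with (Y - 2 * (1 - rho) * X) by ring.
  eapply Rle_trans; [apply Rabs_triang|].
  rewrite Rabs_Ropp, !Rabs_mult, (Rabs_pos_eq 2), (Rabs_pos_eq Y), (Rabs_pos_eq X) by lra.
  pose proof (Rabs_pos (1 - rho)). nra.
Qed.

End Transfer.

Theorem mainTheorem7 (eta : nat -> R) (kappa : nat -> R) (rho : R) (NB : nat) :
  eta_ok eta ->
  (forall N : nat, kappa_solves eta (INR N) (kappa N)) ->
  is_lim_seq (fun NA : nat => EAB eta rho (INR NA) (kappa NA) (INR NB) (kappa NB))
             (2 * (1 - rho) * EB eta (INR NB) (kappa NB))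
  /\ exists N0 : nat, forall NA : nat, (N0 <= NA)%nat ->
       (1/2 < rho -> EAB eta rho (INR NA) (kappa NA) (INR NB) (kappa NB)
                       < EB eta (INR NB) (kappa NB)) /\
       (rho < 1/2 -> EAB eta rho (INR NA) (kappa NA) (INR NB) (kappa NB)
                       > EB eta (INR NB) (kappa NB)).
Proof.
  intros Heta Hkappa.
  destruct (EAB_dist_le eta kappa NB Heta Hkappa rho) as [C HC].
  pose proof (EB_gt0 eta kappa NB Heta Hkappa) as HEB.
  assert (Hlim := is_lim_seq_of_dist_le _ _ _ C HC (is_lim_seq_kappa eta kappa Heta Hkappa)).
  split; [exact Hlim|].
  destruct (Rtotal_order rho (1/2)) as [Hlt | [Heq | Hgt]].
  - destruct (is_lim_seq_eventually_gt _ _ (EB eta (INR NB) (kappa NB)) Hlim) as [N0 HN0];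
      [nra|].
    exists N0. intros NA HNA. split; [lra | intros _; exact (HN0 NA HNA)].
  - exists 0%nat. intros NA _. split; lra.
  - destruct (is_lim_seq_eventually_lt _ _ (EB eta (INR NB) (kappa NB)) Hlim) as [N0 HN0];
      [nra|].
    exists N0. intros NA HNA. split; [intros _; exact (HN0 NA HNA) | lra].
Qed.
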